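(* In $TTR$, if $A$ is an arrow type and $A\subseteq B$, then $B$ is an arrow type.
   Context: $TTR$ types: over a second-order language with first-order variables, function symbols, $n$-ary predicate variables and symbols, and a fixed system $\mathbf E$ of equations; atomic $\perp$ and $X(t_1,\dots,t_n)$; constructors $\to$, $\forall x$, $\forall X$, and $\mu Cx_1\dots x_nA\langle t_1,\dots,t_n\rangle$ for $C$ an $n$-ary predicate symbol occurring and positive in $A$. Subtyping $\subseteq$ is the least relation closed under: $A\subseteq A$; from $A\subseteq A'$, $B\subseteq B'$ infer $A'\to B\subseteq A\to B'$; from $A[G/v]\subseteq B$ infer $\forall vA\subseteq B$ ($G$ a term or formula as appropriate); from $A\subseteq B$ infer $A\subseteq\forall vB$ if $v$ not free in $A$; from $A\subseteq B[v/y]$ infer $A\subseteq B[w/y]$ if $v=w$ is an instance of an equation of $\mathbf E$; transitivity; $D[\mu C\bar xD\langle\bar z\rangle/C(\bar z)][\bar t/\bar x]\subseteq\mu C\bar xD\langle\bar t\rangle$ and its converse; from $D[E/C(\bar x)]\subseteq E$ infer $\mu C\bar xD\langle\bar t\rangle\subseteq E[\bar t/\bar x]$. An arrow type is a type containing at least one arrow $\to$. *)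

(* - First-order variables are de Bruijn indices (nat); function symbols are
     nat-indexed with arities given by  fa : nat -> nat.
   - Predicate variables AND the predicate symbol C bound by a mu are de Bruijn
     indices in a single predicate namespace; their arities are given by a
     context  Delta : nat -> nat  (extended with [scons] under binders).
     Free (unbound) predicate symbols are [PCon c ts], arities  ca : nat -> nat.
   - [Mu n D ts] represents  mu C x_1..x_n D <t_1..t_n> : inside D, predicate
     index 0 is C (arity n) and first-order indices 0..n-1 are x_1..x_n.
   - An abstraction  \x_1..x_n. G  (a second-order instance of a predicate
     variable of arity n) is a type G whose first-order indices 0..n-1 are the
     abstracted x's (values [PA n G]).  *)
From Stdlib Require Import List Arith Bool.
Import ListNotations.

Inductive term : Type :=
| tvar : nat -> term
| tfun : nat -> list term -> term.

Inductive ty : Type :=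
| Bot : ty
| PVar : nat -> list term -> ty
| PCon : nat -> list term -> ty
| Arr : ty -> ty -> ty
| All1 : ty -> ty
| All2 : nat -> ty -> ty
| Mu : nat -> ty -> list term -> ty.

Definition scons {T} (a : T) (f : nat -> T) (k : nat) : T :=
  match k with 0 => a | S k' => f k' end.

Fixpoint tren (r : nat -> nat) (t : term) : term :=
  match t with
  | tvar k => tvar (r k)
  | tfun f ts => tfun f (map (tren r) ts)
  end.

Fixpoint tsubst (s : nat -> term) (t : term) : term :=
  match t with
  | tvar k => s k
  | tfun f ts => tfun f (map (tsubst s) ts)
  end.

Definition upn (n : nat) (s : nat -> term) (i : nat) : term :=
  if i <? n then tvar i else tren (fun k => k + n) (s (i - n)).

Definition shiftby (m : nat) (k : nat) : term := tvar (k + m).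

Definition inst (n : nat) (ts : list term) (i : nat) : term :=
  if i <? n then nth i ts (tvar 0) else tvar (i - n).

Fixpoint fsubst (s : nat -> term) (A : ty) : ty :=
  match A with
  | Bot => Bot
  | PVar X ts => PVar X (map (tsubst s) ts)
  | PCon c ts => PCon c (map (tsubst s) ts)
  | Arr A B => Arr (fsubst s A) (fsubst s B)
  | All1 A => All1 (fsubst (upn 1 s) A)
  | All2 n A => All2 n (fsubst s A)
  | Mu n D ts => Mu n (fsubst (upn n s) D) (map (tsubst s) ts)
  end.

Definition uprn (r : nat -> nat) : nat -> nat := scons 0 (fun X => S (r X)).

Fixpoint prename (r : nat -> nat) (A : ty) : ty :=
  match A with
  | Bot => Bot
  | PVar X ts => PVar (r X) ts
  | PCon c ts => PCon c ts
  | Arr A B => Arr (prename r A) (prename r B)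
  | All1 A => All1 (prename r A)
  | All2 n A => All2 n (prename (uprn r) A)
  | Mu n D ts => Mu n (prename (uprn r) D) ts
  end.

Inductive pval : Type :=
| PV : nat -> pval
| PA : nat -> ty -> pval.

Definition pv_flift (m : nat) (v : pval) : pval :=
  match v with
  | PV Y => PV Y
  | PA n G => PA n (fsubst (upn n (shiftby m)) G)
  end.

Definition pv_plift (v : pval) : pval :=
  match v with
  | PV Y => PV (S Y)
  | PA n G => PA n (prename S G)
  end.

Definition pup (t : nat -> pval) : nat -> pval := scons (PV 0) (fun X => pv_plift (t X)).

Fixpoint psubst (t : nat -> pval) (A : ty) : ty :=
  match A with
  | Bot => Bot
  | PVar X ts =>
      match t X with
      | PV Y => PVar Y ts
      | PA n G => fsubst (inst n ts) G
      end
  | PCon c ts => PCon c ts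
  | Arr A B => Arr (psubst t A) (psubst t B)
  | All1 A => All1 (psubst (fun X => pv_flift 1 (t X)) A)
  | All2 n A => All2 n (psubst (pup t) A)
  | Mu n D ts => Mu n (psubst (pup (fun X => pv_flift n (t X))) D) ts
  end.

Definition beta1 (G : term) (A : ty) : ty := fsubst (scons G tvar) A.
Definition beta2 (n : nat) (G : ty) (A : ty) : ty := psubst (scons (PA n G) PV) A.
Definition lift1 (A : ty) : ty := fsubst (shiftby 1) A.
Definition lift2 (A : ty) : ty := prename S A.
Definition subst_at (y : nat) (v : term) (B : ty) : ty :=
  fsubst (fun k => if k =? y then v else tvar k) B.

(* D[mu C xs D <zs> / C(zs)][ts/xs] *)
Definition mu_unfold (n : nat) (D : ty) (ts : list term) : ty :=
  fsubst (inst n ts)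
    (psubst (scons (PA n (Mu n (fsubst (upn n (shiftby n)) D) (map tvar (seq 0 n)))) PV) D).

(* D[E/C(xs)] : replace every C(ss) by E[ss/xs]; E lives in the context
   (x_1..x_n, outer), as does the result *)
Definition mu_fold_body (n : nat) (D E : ty) : ty :=
  psubst (scons (PA n (fsubst (upn n (shiftby n)) E)) PV) D.

Fixpoint occp (p : bool) (X : nat) (A : ty) : bool :=
  match A with
  | Bot => false
  | PVar Y _ => p && (Y =? X)
  | PCon _ _ => false
  | Arr A B => occp (negb p) X A || occp p X B
  | All1 A => occp p X A
  | All2 _ A => occp p (S X) A
  | Mu _ D _ => occp p (S X) D
  end.

Definition occurs (X : nat) (A : ty) : bool := occp true X A || occp false X A.
Definition positive (X : nat) (A : ty) : bool := negb (occp false X A).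

Fixpoint wf_tm (fa : nat -> nat) (t : term) : bool :=
  match t with
  | tvar _ => true
  | tfun f ts => (length ts =? fa f) && forallb (wf_tm fa) ts
  end.

Fixpoint wf_ty (fa ca : nat -> nat) (Delta : nat -> nat) (A : ty) : bool :=
  match A with
  | Bot => true
  | PVar X ts => (length ts =? Delta X) && forallb (wf_tm fa) ts
  | PCon c ts => (length ts =? ca c) && forallb (wf_tm fa) ts
  | Arr A B => wf_ty fa ca Delta A && wf_ty fa ca Delta B
  | All1 A => wf_ty fa ca Delta A
  | All2 n A => wf_ty fa ca (scons n Delta) A
  | Mu n D ts =>
      (length ts =? n) && forallb (wf_tm fa) ts
      && occurs 0 D && positive 0 D
      && wf_ty fa ca (scons n Delta) D
  end.

Definition eq_instance (E : term -> term -> Prop) (v w : term) : Prop :=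
  exists l r (s : nat -> term), E l r /\ v = tsubst s l /\ w = tsubst s r.

Fixpoint has_arrow (A : ty) : bool :=
  match A with
  | Bot | PVar _ _ | PCon _ _ => false
  | Arr _ _ => true
  | All1 A | All2 _ A | Mu _ A _ => has_arrow A
  end.

Definition arrow_type (A : ty) : Prop := has_arrow A = true.

Inductive sub (fa ca : nat -> nat) (E : term -> term -> Prop)
  : (nat -> nat) -> ty -> ty -> Prop :=
| sub_refl Delta A :
    wf_ty fa ca Delta A = true ->
    sub fa ca E Delta A A
| sub_arr Delta A A' B B' :
    wf_ty fa ca Delta (Arr A' B) = true -> wf_ty fa ca Delta (Arr A B') = true ->
    sub fa ca E Delta A A' -> sub fa ca E Delta B B' ->
    sub fa ca E Delta (Arr A' B) (Arr A B')
| sub_all1_l Delta A B (G : term) :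
    wf_ty fa ca Delta (All1 A) = true -> wf_ty fa ca Delta B = true ->
    wf_tm fa G = true ->
    sub fa ca E Delta (beta1 G A) B ->
    sub fa ca E Delta (All1 A) B
| sub_all2_l Delta n A B (G : ty) :
    wf_ty fa ca Delta (All2 n A) = true -> wf_ty fa ca Delta B = true ->
    wf_ty fa ca Delta G = true ->
    sub fa ca E Delta (beta2 n G A) B ->
    sub fa ca E Delta (All2 n A) B
| sub_all1_r Delta A B :
    wf_ty fa ca Delta A = true -> wf_ty fa ca Delta (All1 B) = true ->
    sub fa ca E Delta (lift1 A) B ->
    sub fa ca E Delta A (All1 B)
| sub_all2_r Delta n A B :
    wf_ty fa ca Delta A = true -> wf_ty fa ca Delta (All2 n B) = true ->
    sub fa ca E (scons n Delta) (lift2 A) B ->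
    sub fa ca E Delta A (All2 n B)
| sub_eq Delta A B y v w :
    wf_ty fa ca Delta A = true -> wf_ty fa ca Delta (subst_at y w B) = true ->
    eq_instance E v w ->
    sub fa ca E Delta A (subst_at y v B) ->
    sub fa ca E Delta A (subst_at y w B)
| sub_trans Delta A B C :
    sub fa ca E Delta A B -> sub fa ca E Delta B C ->
    sub fa ca E Delta A C
| sub_unfold_l Delta n D ts :
    wf_ty fa ca Delta (mu_unfold n D ts) = true ->
    wf_ty fa ca Delta (Mu n D ts) = true ->
    sub fa ca E Delta (mu_unfold n D ts) (Mu n D ts)
| sub_unfold_r Delta n D ts :
    wf_ty fa ca Delta (mu_unfold n D ts) = true ->
    wf_ty fa ca Delta (Mu n D ts) = true ->
    sub fa ca E Delta (Mu n D ts) (mu_unfold n D ts)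
| sub_fold Delta n D ts F :
    wf_ty fa ca Delta (Mu n D ts) = true ->
    wf_ty fa ca Delta (fsubst (inst n ts) F) = true ->
    sub fa ca E Delta (mu_fold_body n D F) F ->
    sub fa ca E Delta (Mu n D ts) (fsubst (inst n ts) F).

(* Substitutions (first-order, renamings, predicate instantiation) can only add
   arrows, never remove them, so every rule except folding and unfolding of
   [mu] visibly carries an arrow of the left-hand side over to the right-hand
   side.  For [mu C xs D <ts>] the unfolding has an arrow exactly when [D] has
   one: the type substituted for [C] is [mu] of [D] itself, so it brings in no
   new arrow.  The fold rule is then covered by induction, because
   [D[E/C(xs)]] keeps the arrows of [D]. *)

Lemma has_arrow_fsubst A : forall s, has_arrow (fsubst s A) = has_arrow A.
Proof. induction A; intros s; simpl; auto. Qed.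

Lemma has_arrow_prename A : forall r, has_arrow (prename r A) = has_arrow A.
Proof. induction A; intros r; simpl; auto. Qed.

Lemma has_arrow_psubst A :
  forall t, has_arrow A = true -> has_arrow (psubst t A) = true.
Proof. induction A; intros t H; simpl in *; try discriminate; auto. Qed.

Definition arrow_free_pval (v : pval) : bool :=
  match v with
  | PV _ => true
  | PA _ G => negb (has_arrow G)
  end.

Definition arrow_free_psubst (t : nat -> pval) : Prop :=
  forall X, arrow_free_pval (t X) = true.

Lemma arrow_free_pv_flift m v :
  arrow_free_pval (pv_flift m v) = arrow_free_pval v.
Proof. destruct v; simpl; rewrite ?has_arrow_fsubst; reflexivity. Qed.

Lemma arrow_free_pv_plift v : arrow_free_pval (pv_plift v) = arrow_free_pval v.
Proof. destruct v; simpl; rewrite ?has_arrow_prename; reflexivity. Qed.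

Lemma arrow_free_pup t : arrow_free_psubst t -> arrow_free_psubst (pup t).
Proof.
  intros Ht [|X]; simpl; [reflexivity|].
  rewrite arrow_free_pv_plift; apply Ht.
Qed.

Lemma has_arrow_psubst_arrow_free A :
  forall t, arrow_free_psubst t -> has_arrow (psubst t A) = has_arrow A.
Proof.
  induction A as [| X ts | c ts | A1 IH1 A2 IH2 | A IH | n A IH | n A IH ts];
    intros t Ht; simpl; auto.
  - specialize (Ht X); destruct (t X) as [Y | n G]; simpl in *; auto.
    rewrite has_arrow_fsubst; destruct (has_arrow G); easy.
  - apply IH; intros X; rewrite arrow_free_pv_flift; apply Ht.
  - apply IH, arrow_free_pup, Ht.
  - apply IH, arrow_free_pup; intros X; rewrite arrow_free_pv_flift; apply Ht.
Qed.

Lemma has_arrow_mu_unfold n D ts : has_arrow (mu_unfold n D ts) = has_arrow D.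
Proof.
  unfold mu_unfold; rewrite has_arrow_fsubst.
  destruct (has_arrow D) eqn:HD.
  - apply has_arrow_psubst, HD.
  - rewrite has_arrow_psubst_arrow_free; [exact HD|].
    intros [|X]; simpl; [rewrite has_arrow_fsubst, HD|]; reflexivity.
Qed.

Theorem lemma4p5 (fa ca : nat -> nat) (E : term -> term -> Prop)
  (Delta : nat -> nat) (A B : ty) :
  arrow_type A -> sub fa ca E Delta A B -> arrow_type B.
Proof.
  unfold arrow_type; intros HA Hsub.
  induction Hsub; simpl in *; auto.
  - apply IHHsub; unfold beta1; rewrite has_arrow_fsubst; exact HA.
  - apply IHHsub; apply has_arrow_psubst, HA.
  - apply IHHsub; unfold lift1; rewrite has_arrow_fsubst; exact HA.
  - apply IHHsub; unfold lift2; rewrite has_arrow_prename; exact HA.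
  - unfold subst_at in *; rewrite has_arrow_fsubst in *; auto.
  - rewrite has_arrow_mu_unfold in HA; exact HA.
  - rewrite has_arrow_mu_unfold; exact HA.
  - rewrite has_arrow_fsubst; apply IHHsub, has_arrow_psubst, HA.
Qed.
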